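(* Let $x_k>0$ be the reactance of a transmission line $k$, and let $0\le x_{k,V}^{\min}\le x_{k,V}^{\max}$ be the minimum and maximum reactance of a continuously variable series reactor (CVSR) that may be installed on line $k$. Define $b_k=1/x_k$, $$b_{k,V}^{\min}=-\frac{x_{k,V}^{\max}}{x_k(x_k+x_{k,V}^{\max})},\qquad b_{k,V}^{\max}=-\frac{x_{k,V}^{\min}}{x_k(x_k+x_{k,V}^{\min})},$$ let $\theta_k^{\max}>0$, and set $M_k=|b_{k,V}^{\min}\theta_k^{\max}|$. Let $P_k\in\mathbb{R}$, $\theta_k\in\mathbb{R}$ with $|\theta_k|\le\theta_k^{\max}$, and $\delta_k\in\{0,1\}$. Then the following are equivalent: (i) (nonlinear DC power flow with CVSR) there exists $b_k^V$ with $b_{k,V}^{\min}\le b_k^V\le b_{k,V}^{\max}$ such that $P_k=(b_k+\delta_k b_k^V)\theta_k$; (ii) (mixed integer linear reformulation) there exist $w_k,z_k\in\mathbb{R}$ and $y_k\in\{0,1\}$ such that $P_k=b_k\theta_k+w_k$, $-\delta_k\theta_k^{\max}\le z_k\le\delta_k\theta_k^{\max}$, $\theta_k-(1-\delta_k)\theta_k^{\max}\le z_k\le\theta_k+(1-\delta_k)\theta_k^{\max}$, $-M_ky_k+z_kb_{k,V}^{\min}\le w_k\le z_kb_{k,V}^{\max}+M_ky_k$, and $-M_k(1-y_k)+z_kb_{k,V}^{\max}\le w_k\le z_kb_{k,V}^{\min}+M_k(1-y_k)$.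
   Context: In the DC power flow model, a CVSR inserted in series on line $k$ adds a reactance $x_k^V\in[x_{k,V}^{\min},x_{k,V}^{\max}]$, so the line's susceptance becomes $-1/(x_k+x_k^V)=-(b_k+b_k^V)$ with $b_k=1/x_k$ and $b_k^V=-x_k^V/(x_k(x_k+x_k^V))$; the stated $b_{k,V}^{\min},b_{k,V}^{\max}$ are the resulting bounds on $b_k^V$. The binary $\delta_k=1$ means a CVSR is installed on line $k$, $\theta_k$ is the voltage angle difference across line $k$, and $P_k$ is the active power flow on line $k$. *)

From Stdlib Require Import Reals Lra.
Open Scope R_scope.

Definition bline (x : R) : R := / x.

Definition bV_of (x xV : R) : R := - xV / (x * (x + xV)).

Definition bVmin (x xVmax : R) : R := bV_of x xVmax.
Definition bVmax (x xVmin : R) : R := bV_of x xVmin.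

Definition bigM (x xVmax thmax : R) : R := Rabs (bVmin x xVmax * thmax).

(** The constraints on [z] pin it to [delta * theta], so (ii) says that [w] is a
    product [bV * z] with [bV] in [[bVmin, bVmax]], encoded by a disjunction on the
    sign of [z]: for [z >= 0] it is [bVmin z <= w <= bVmax z], for [z <= 0] the reverse,
    and the binary [y] selects the branch.  Since [bVmin <= bVmax <= 0] and
    [|z| <= thmax], the big-M constant [M = - bVmin * thmax] is large enough to make
    the unselected branch vacuous. *)

From Stdlib Require Import Reals Lra Psatz.
Open Scope R_scope.

Lemma bV_of_sub x v : 0 < x -> 0 <= v -> bV_of x v = / (x + v) - / x.
Proof. intros hx hv; unfold bV_of; field; lra. Qed.

Lemma bV_of_antitone x v1 v2 :
  0 < x -> 0 <= v1 -> v1 <= v2 -> bV_of x v2 <= bV_of x v1.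
Proof.
  intros hx hv1 hv12; rewrite !bV_of_sub by lra.
  assert (/ (x + v2) <= / (x + v1)) by (apply Rinv_le_contravar; lra).
  lra.
Qed.

Lemma bV_of0 x : bV_of x 0 = 0.
Proof. unfold bV_of, Rdiv; ring. Qed.

Lemma bV_of_nonpos x v : 0 < x -> 0 <= v -> bV_of x v <= 0.
Proof. intros hx hv; rewrite <- (bV_of0 x); apply bV_of_antitone; lra. Qed.

Lemma bigM_eq x xVmax thmax :
  0 < x -> 0 <= xVmax -> 0 <= thmax -> bigM x xVmax thmax = - bVmin x xVmax * thmax.
Proof.
  intros hx hv hth; unfold bigM.
  pose proof (bV_of_nonpos x xVmax hx hv) as hneg; unfold bVmin.
  rewrite Rabs_left1; [ring | nra].
Qed.

Lemma Rabs_le_bounds z T : Rabs z <= T -> - T <= z <= T.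
Proof.
  intros h; pose proof (Rle_abs z); pose proof (Rle_abs (- z)).
  rewrite Rabs_Ropp in *; lra.
Qed.

Lemma switched_angle_iff (delta theta thmax z : R) :
  (delta = 0 \/ delta = 1) -> Rabs theta <= thmax ->
  (- delta * thmax <= z <= delta * thmax /\
   theta - (1 - delta) * thmax <= z <= theta + (1 - delta) * thmax)
  <-> z = delta * theta.
Proof.
  intros hdelta htheta; apply Rabs_le_bounds in htheta.
  destruct hdelta as [-> | ->]; split; intros; lra.
Qed.

Section IntervalProduct.

Variables a c T : R.
Hypotheses (hac : a <= c) (hc : c <= 0).

Lemma mul_interval_of_between z w :
  (a * z <= w <= c * z \/ c * z <= w <= a * z) ->
  exists b, a <= b <= c /\ w = b * z.
Proof.
  intros hw; destruct (Req_dec z 0) as [-> | hz].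
  - exists a; split; [lra | nra].
  - exists (w / z); split; [| field; exact hz].
    assert (hwz : w = (w / z) * z) by (field; exact hz).
    set (b := w / z) in *; clearbody b; subst w.
    destruct (Rle_or_lt 0 z); split; nra.
Qed.

Lemma mul_interval_iff_bigM z w :
  Rabs z <= T ->
  (exists b, a <= b <= c /\ w = b * z) <->
  (exists y, (y = 0 \/ y = 1) /\
     - (- a * T) * y + z * a <= w <= z * c + (- a * T) * y /\
     - (- a * T) * (1 - y) + z * c <= w <= z * a + (- a * T) * (1 - y)).
Proof.
  intros hz; apply Rabs_le_bounds in hz; split.
  - intros (b & hb & ->).
    destruct (Rle_or_lt 0 z); [exists 0 | exists 1]; repeat split; nra.
  - intros (y & [-> | ->] & hw1 & hw2); apply mul_interval_of_between; lra.
Qed.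

End IntervalProduct.

Theorem mainTheorem1 (x xVmin xVmax thmax P theta delta : R)
  (hx : 0 < x) (hmin : 0 <= xVmin) (hminmax : xVmin <= xVmax)
  (hth : 0 < thmax) (htheta : Rabs theta <= thmax)
  (hdelta : delta = 0 \/ delta = 1) :
  (exists bV : R,
      bVmin x xVmax <= bV <= bVmax x xVmin /\
      P = (bline x + delta * bV) * theta)
  <->
  (exists w z y : R,
      (y = 0 \/ y = 1) /\
      P = bline x * theta + w /\
      - delta * thmax <= z <= delta * thmax /\
      theta - (1 - delta) * thmax <= z <= theta + (1 - delta) * thmax /\
      - bigM x xVmax thmax * y + z * bVmin x xVmax <= w
        <= z * bVmax x xVmin + bigM x xVmax thmax * y /\
      - bigM x xVmax thmax * (1 - y) + z * bVmax x xVmin <= w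
        <= z * bVmin x xVmax + bigM x xVmax thmax * (1 - y)).
Proof.
  assert (hac : bVmin x xVmax <= bVmax x xVmin) by (apply bV_of_antitone; lra).
  assert (hc : bVmax x xVmin <= 0) by (apply bV_of_nonpos; lra).
  assert (hz : Rabs (delta * theta) <= thmax).
  { rewrite Rabs_mult; destruct hdelta as [-> | ->];
      rewrite ?Rabs_R0, ?Rabs_R1; lra. }
  pose proof (mul_interval_iff_bigM _ _ _ hac hc (delta * theta) (P - bline x * theta) hz)
    as hprod.
  rewrite bigM_eq by lra; split.
  - intros (bV & hbV & hP).
    destruct (proj1 hprod) as (y & hy & hw).
    { exists bV; split; [exact hbV | rewrite hP; ring]. }
    exists (P - bline x * theta), (delta * theta), y.
    pose proof (proj2 (switched_angle_iff _ _ _ (delta * theta) hdelta htheta) eq_refl).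
    repeat split; tauto || ring.
  - intros (w & z & y & hy & hP & hzcon & hw).
    assert (z = delta * theta) by (apply (switched_angle_iff delta theta thmax); tauto).
    subst z; replace w with (P - bline x * theta) in hw by lra.
    destruct (proj2 hprod) as (bV & hbV & hPb); [exists y; tauto |].
    exists bV; split; [exact hbV | lra].
Qed.
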